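(* Consider the $k$-agent prophet game with random tie-breaking, and assume $n\ge k$. In every Nash equilibrium $S$ of the game, the expected social welfare satisfies $$\sum_{i=1}^k u_i(S)\ \ge\ \frac12\,\mathbb{E}\Big[\sum_{j=1}^{k}y_j\Big].$$
   Context: Prophet game with competing agents: there are $n$ rewards $v_1,\ldots,v_n$, where $v_t$ is a non-negative real random variable drawn from a known distribution $F_t$ (with finite mean), independently across $t$. There are $k$ agents. At each time $t=1,\ldots,n$, the value $v_t$ is revealed to all agents, and every active agent (an agent who has not yet received a reward) decides whether to select $v_t$. If exactly one agent selects $v_t$, it is assigned to that agent. If several agents select it, it is assigned to one of them by the tie-breaking rule. Under random tie-breaking, the reward goes to a uniformly random agent among those selecting it. An agent who receives a reward becomes inactive, and unselected rewards are lost forever. A strategy of an agent is a (possibly randomized) rule that, for each $t$, decides whether to select $v_t$ based on $t$, the realized value $v_t$, and the set of currently active agents. The utility $u_i(S)$ of agent $i$ under strategy profile $S=(S_i,S_{-i})$ is her expected received reward (zero if she receives none). A strategy profile $S$ is a Nash equilibrium if for every agent $i$ and every strategy $S_i'$, $u_i(S_i',S_{-i})\le u_i(S)$. For $j=1,\ldots,n$, $y_j$ denotes the $j$-th largest value among $v_1,\ldots,v_n$. *)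

From HB Require Import structures.
From mathcomp Require Import all_boot all_order all_algebra.
From mathcomp Require Import all_classical all_reals all_analysis.
Set Implicit Arguments. Unset Strict Implicit. Unset Printing Implicit Defensive.
Import Order.TTheory GRing.Theory Num.Theory.
Local Open Scope ring_scope.
Local Open Scope ereal_scope.

Section Prophet.
Variables (R : realType) (n k : nat).
(* F t : the distribution of the reward v_t (time t = 0, ..., n-1; later
   indices are irrelevant). *)
Variable F : nat -> probability R R.

(* A (behavioural) strategy of one agent: [s t v A] is the probability with
   which the agent selects v_t = v at time t when the active set is A. *)
Definition strategy := nat -> R -> {set 'I_k} -> R.

Definition valid_strategy (s : strategy) : Prop :=
  (forall t v A, (0 <= s t v A <= 1)%R) /\
  (forall t A, measurable_fun setT (fun v => s t v A)).

Definition profile := 'I_k -> strategy.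

Definition valid_profile (S : profile) : Prop := forall i, valid_strategy (S i).

Definition sel_prob (S : profile) (t : nat) (v : R) (A B : {set 'I_k}) : R :=
  (\prod_(j in B) S j t v A * \prod_(j in A :\: B) (1 - S j t v A))%R.

(* expected reward of agent i at time t, given that exactly B selects the
   value v, with random tie-breaking, and continuation values W *)
Definition outcome (W : {set 'I_k} -> 'I_k -> \bar R) (v : R)
    (A B : {set 'I_k}) (i : 'I_k) : \bar R :=
  if B == finset.set0 then W A i
  else \sum_(j in B) ((#|B|%:R)^-1)%:E *
          (if j == i then v%:E else W (A :\ j) i).

(* [cont S m t A i] : expected total reward collected by agent i during the
   rounds t, t+1, ..., t+m-1, when the set of active agents at the start of
   round t is A (law of total expectation over the independent v_t, the
   selection coins and the tie-breaking). *)
Fixpoint cont (S : profile) (m t : nat) (A : {set 'I_k}) (i : 'I_k) : \bar R :=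
  match m with
  | 0 => 0
  | m'.+1 =>
      \int[F t]_v (\sum_(B in {set 'I_k} | B \subset A)
                     (sel_prob S t v A B)%:E * outcome (cont S m' t.+1) v A B i)
  end.

Definition utility (S : profile) (i : 'I_k) : \bar R := cont S n 0 [set: 'I_k] i.

Definition deviate (S : profile) (i : 'I_k) (s' : strategy) : profile :=
  fun j => if j == i then s' else S j.

Definition nash (S : profile) : Prop :=
  valid_profile S /\
  forall (i : 'I_k) (s' : strategy), valid_strategy s' ->
    utility (deviate S i s') i <= utility S i.

(* iterated expectation over independent v_t ~ F t, t = t0, ..., t0+m-1
   (product measure, via Tonelli, for nonnegative integrands) *)
Fixpoint iexp (m t0 : nat) (g : seq R -> \bar R) : \bar R :=
  match m with
  | 0 => g [::]
  | m'.+1 => \int[F t0]_x iexp m' t0.+1 (fun s => g (x :: s))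
  end.

Definition top_sum (vs : seq R) : R :=
  (\sum_(x <- take k (sort (fun x y : R => y <= x)%R vs)) x)%R.

End Prophet.

From HB Require Import structures.
From mathcomp Require Import all_boot all_order all_algebra.
From mathcomp Require Import all_classical all_reals all_analysis.
From mathcomp Require Import measurable_realfun.
From mathcomp Require Import ring lra.
Set Implicit Arguments. Unset Strict Implicit. Unset Printing Implicit Defensive.
Import Order.TTheory GRing.Theory Num.Theory.
Local Open Scope ring_scope.

(* Fix a threshold th >= 0 and write C(th) for the total expected excess
   sum_t E[(v_t - th)^+].
   - Benchmark: y_1 + ... + y_k <= k*th + sum_t (v_t - th)^+ pointwise, hence
     E[y_1 + ... + y_k] <= k*th + C(th)            (top_sum_expectation_le).
   - Deviation: an agent who selects exactly the values >= th earns, from any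
     active set containing her, at least min(th, C(th)/k): by induction over
     the rounds, a round with value v pays her the guaranteed continuation
     plus a 1/k share of (v - th)^+, since at most k agents split the value
     (threshold_guarantee).  In equilibrium every agent earns at least this.
   - Balancing: choosing k*th slightly above the welfare forces C(th) below
     the welfare, so the benchmark is at most twice the welfare
     (balanced_threshold). *)

Definition excess {R : realDomainType} (th v : R) : R := Num.max (v - th) 0.

Lemma excess_ge0 {R : realDomainType} (th v : R) : 0 <= excess th v.
Proof. by rewrite /excess le_max lexx orbT. Qed.

Lemma excess_above {R : realDomainType} (th v : R) :
  th <= v -> excess th v = v - th.
Proof. by move=> thv; rewrite /excess max_l // subr_ge0. Qed.

Lemma excess_below {R : realDomainType} (th v : R) :
  v <= th -> excess th v = 0.
Proof. by move=> vth; rewrite /excess max_r // subr_le0. Qed.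

(* Prophet-side bound: the k largest values of vs are at most th each plus
   their excess over th, so their sum is at most k*th + sum of all excesses. *)
Lemma top_sum_le_excess {R : realType} (k : nat) (th : R) (vs : seq R) :
  (0 <= th)%R ->
  (top_sum k vs <= k%:R * th + \sum_(x <- vs) excess th x)%R.
Proof.
move=> th0; rewrite /top_sum; set s := sort _ vs.
apply: (@le_trans _ _ (\sum_(x <- take k s) (th + excess th x))%R).
  by apply: ler_sum => x _; rewrite -lerBlDl /excess le_max lexx.
rewrite big_split /= big_const_seq count_predT iter_addr_0 -[(th *+ _)%R]mulr_natl.
apply: lerD.
  by apply: ler_wpM2r => //; rewrite ler_nat size_take_min geq_minl.
have sort_perm : perm_eq s vs by rewrite perm_sort perm_refl.
rewrite -(perm_big _ sort_perm) -[in leRHS](cat_take_drop k s) big_cat /=.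
by rewrite lerDl sumr_ge0 // => x _; exact: excess_ge0.
Qed.

(* Selection coins are independent: the probabilities that exactly B among
   the active agents A select sum to one (expand prod_(j in A) (p j + 1 - p j)). *)
Lemma independent_selection_sum {R : comNzRingType} {I : finType}
    (p : I -> R) (A : {set I}) :
  (\sum_(B : {set I} | B \subset A)
     (\prod_(j in B) p j * \prod_(j in A :\: B) (1 - p j)) = 1)%R.
Proof.
pose P j := if j \in A then p j else 0%R.
pose Q j := if j \in A then (1 - p j)%R else 1%R.
have expand := bigA_distr 1%R +%R P Q.
have PQ1 : (\prod_j (P j + Q j) = 1)%R.
  by apply: big1 => j _; rewrite /P /Q; case: ifP => _; rewrite ?subrKC ?add0r.
rewrite PQ1 (bigID (fun B : {set I} => B \subset A)) /= [X in (_ + X)%R]big1 ?addr0 in expand;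
  last first.
  by move=> B /subsetPn [j jB jA]; rewrite (bigD1 j) //= jB /P (negbTE jA) mul0r.
rewrite [RHS]expand; apply: eq_big => // B BA.
rewrite [RHS](bigID (mem B)) /=; congr (_ * _)%R.
  by apply: eq_big => // j jB; rewrite jB /P (fintype.subsetP BA j jB).
rewrite [RHS](bigID (mem A)) /= [X in (_ * X)%R]big1 ?mulr1; last first.
  by move=> j /andP [jB /negbTE jA]; rewrite (negbTE jB) /Q jA.
apply: eq_big => j; first by rewrite finset.in_setD andbC.
by rewrite finset.in_setD => /andP [/negbTE jB jA]; rewrite jB /Q jA.
Qed.

(* A tie among N+1 selecting agents pays each of them (v + N r)/(N+1) when
   the losers keep a continuation worth r; this beats r + c (v - th) as soon
   as r <= th <= v and c <= 1/(N+1). *)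
Lemma tie_share_ge {R : realFieldType} (r th v c N : R) :
  (0 <= r <= th -> th <= v -> 0 <= N -> 0 <= c <= (N + 1)^-1 ->
  r + c * (v - th) <= (N + 1)^-1 * (v + N * r))%R.
Proof.
move=> /andP [r0 rth] thv N0 /andP [c0 cq].
have N1 : (N + 1 != 0)%R by rewrite gt_eqF // ltr_wpDl.
set q := ((N + 1)^-1)%R in cq *.
have qN : (q * N = 1 - q)%R by rewrite -[X in (_ = X - _)%R](mulVf N1) /q; ring.
have h1 : (c * (v - th) <= q * (v - th))%R by rewrite ler_wpM2r // subr_ge0.
have h2 : (q * (v - th) <= q * (v - r))%R.
  by rewrite ler_wpM2l ?(le_trans c0 cq) // lerB.
have -> : (q * (v + N * r) = q * v + (1 - q) * r)%R by rewrite -qN; ring.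
lra.
Qed.

Local Open Scope ereal_scope.

(* min(x, y + z) <= min(x, y) + z for z >= 0: peeling one round off the
   guaranteed value of the threshold deviation. *)
Lemma mine_addr_le {R : realDomainType} (x y z : \bar R) :
  0 <= z -> mine x (y + z) <= mine x y + z.
Proof.
move=> z0; rewrite ge_min; have [_ | _] := leP x y.
  by rewrite leeDl.
by rewrite lexx orbT.
Qed.

(* Monotonicity of the integral needs no measurability of the smaller
   integrand once the larger one is nonnegative. *)
Lemma le_integral_ge0_ub {d} {T : measurableType d} {R : realType}
    (mu : {measure set T -> \bar R}) (f g : T -> \bar R) :
  (forall x, 0 <= g x) -> (forall x, f x <= g x) ->
  \int[mu]_x f x <= \int[mu]_x g x.
Proof.
move=> g0 fg; rewrite integralE.
apply: (@le_trans _ _ (\int[mu]_x f^\+ x)).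
  rewrite -[leRHS]sube0; apply: leeB => //.
  by apply: integral_ge0 => x _; exact: funeneg_ge0.
rewrite (ge0_integralTE mu g0) ge0_integralTE; last by move=> x; exact: funepos_ge0.
apply: ereal_sup_le => _ [h hf <-]; exists h => //= x.
by apply: le_trans (hf x) _; rewrite funeposE ge_max fg g0.
Qed.

Lemma integral_cst_probability {d} {T : measurableType d} {R : realType}
    (mu : probability T R) (c : \bar R) :
  \int[mu]_x c = c.
Proof.
by rewrite integral_cst // -[RHS]mule1; congr (_ * _); exact: probability_setT.
Qed.

Lemma measurable_excess {R : realType} (th : R) :
  measurable_fun setT (excess th).
Proof.
rewrite (_ : excess th = ((fun v => v - th) \max (fun=> 0))%R) //.
by apply: measurable_maxr => //; exact: measurable_funB.
Qed.

Lemma integral_affine_excess {R : realType} (mu : probability R R) (r c th : R) :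
  (0 <= r)%R -> (0 <= c)%R ->
  \int[mu]_v (r + c * excess th v)%:E = r%:E + c%:E * \int[mu]_v (excess th v)%:E.
Proof.
move=> r0 c0; under eq_integral do rewrite EFinD EFinM.
rewrite ge0_integralD //; last 2 first.
- by move=> v _; rewrite mule_ge0 // lee_fin excess_ge0.
- by apply/measurable_funeM/measurable_EFinP; exact: measurable_excess.
rewrite integral_cst_probability ge0_integralZl //.
  by apply/measurable_EFinP; exact: measurable_excess.
by move=> v _; rewrite lee_fin excess_ge0.
Qed.

Section IteratedExpectation.
Variables (R : realType) (F : nat -> probability R R).

Definition excess_mass (th : R) (m t : nat) : \bar R :=
  \sum_(s < m) \int[F (t + s)%N]_v (excess th v)%:E.

Lemma excess_mass_ge0 th m t : 0 <= excess_mass th m t.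
Proof.
by apply: sume_ge0 => s _; apply: integral_ge0 => v _; rewrite lee_fin excess_ge0.
Qed.

Lemma excess_massS th m t :
  excess_mass th m.+1 t = \int[F t]_v (excess th v)%:E + excess_mass th m t.+1.
Proof.
rewrite /excess_mass big_ord_recl addn0; congr (_ + _).
by apply: eq_bigr => s _; rewrite addSnnS.
Qed.

Lemma iexp_ge0 m t (g : seq R -> \bar R) :
  (forall s, 0 <= g s) -> 0 <= iexp F m t g.
Proof.
elim: m t g => [|m IH] t g g0 /=; first exact: g0.
by apply: integral_ge0 => x _; apply: IH.
Qed.

Lemma le_iexp m t (g h : seq R -> \bar R) :
  (forall s, 0 <= h s) -> (forall s, g s <= h s) -> iexp F m t g <= iexp F m t h.
Proof.
elim: m t g h => [|m IH] t g h h0 gh /=; first exact: gh.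
apply: le_integral_ge0_ub => x; first by apply: iexp_ge0.
by apply: IH.
Qed.

Lemma iexp0 m t : iexp F m t (fun=> 0) = 0.
Proof.
elim: m t => [|m IH] t //=.
by under eq_integral do rewrite IH; exact: integral0.
Qed.

Lemma iexp_affine_excess th m t (a : R) : (0 <= a)%R ->
  iexp F m t (fun s => (a + \sum_(x <- s) excess th x)%:E) =
  a%:E + excess_mass th m t.
Proof.
elim: m t a => [|m IH] t a a0 /=.
  by rewrite big_nil addr0 /excess_mass big_ord0 adde0.
have shift x : iexp F m t.+1 (fun s => (a + \sum_(y <- x :: s) excess th y)%:E)
    = (a + excess th x)%:E + excess_mass th m t.+1.
  rewrite -IH ?addr_ge0 ?excess_ge0 //; congr iexp.
  by apply: funext => s; rewrite big_cons addrA.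
under eq_integral do rewrite shift.
rewrite ge0_integralD //; last 3 first.
- by move=> x _; rewrite lee_fin addr_ge0 // excess_ge0.
- by apply/measurable_EFinP/measurable_funD => //; exact: measurable_excess.
- by move=> x _; exact: excess_mass_ge0.
rewrite integral_cst_probability excess_massS addeA; congr (_ + _).
rewrite -[X in _ = _ + X]mul1e -integral_affine_excess ?ler01 //.
by apply: eq_integral => x _; rewrite mul1r.
Qed.

Lemma top_sum_expectation_le (k m t : nat) (th : R) :
  (0 <= th)%R ->
  iexp F m t (fun vs => (top_sum k vs)%:E) <= (k%:R * th)%:E + excess_mass th m t.
Proof.
move=> th0; rewrite -iexp_affine_excess ?mulr_ge0 //.
apply: le_iexp => vs; last by rewrite lee_fin top_sum_le_excess.
by rewrite lee_fin addr_ge0 ?mulr_ge0 // sumr_ge0 // => x _; exact: excess_ge0.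
Qed.

End IteratedExpectation.

Section Selection.
Variables (R : realType) (k : nat).
Implicit Types (S : profile R k) (A B : {set 'I_k}) (W : {set 'I_k} -> 'I_k -> \bar R).

Lemma sel_prob_ge0 S t v A B :
  (forall j, 0 <= S j t v A <= 1)%R -> (0 <= sel_prob S t v A B)%R.
Proof.
move=> S01; rewrite /sel_prob mulr_ge0 //.
  by apply: prodr_ge0 => j _; case/andP: (S01 j).
by apply: prodr_ge0 => j _; rewrite subr_ge0; case/andP: (S01 j).
Qed.

Lemma sel_prob_sum1 S t v A :
  (\sum_(B in {set 'I_k} | B \subset A) sel_prob S t v A B = 1)%R.
Proof. exact: (independent_selection_sum (fun j => S j t v A)). Qed.

Lemma sel_prob_selected0 S t v A B i :
  i \in B -> S i t v A = 0%R -> sel_prob S t v A B = 0%R.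
Proof. by move=> iB Si0; rewrite /sel_prob (bigD1 i) //= Si0 !mul0r. Qed.

Lemma sel_prob_unselected0 S t v A B i :
  i \in A -> i \notin B -> S i t v A = 1%R -> sel_prob S t v A B = 0%R.
Proof.
move=> iA iB Si1; rewrite /sel_prob [X in (_ * X)%R](bigD1 i) /=.
  by rewrite Si1 subrr mul0r mulr0.
by rewrite finset.in_setD iB iA.
Qed.

Lemma outcome_ge_avg W v A B i (r : R) :
  i \in A -> B != finset.set0 -> (forall A', i \in A' -> r%:E <= W A' i) ->
  (\sum_(j in B) #|B|%:R^-1 * (if j == i then v else r))%:E
    <= outcome W v A B i.
Proof.
move=> iA B0 Wr; rewrite /outcome (negbTE B0) -sumEFin.
apply: lee_sum => j jB; rewrite EFinM lee_wpmul2l ?lee_fin ?invr_ge0 //.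
case: eqP => [// | /eqP ji]; apply: Wr.
by rewrite finset.in_setD1 iA andbT eq_sym.
Qed.

Lemma outcome_ge_unselected W v A B i (r : R) :
  i \in A -> i \notin B -> (forall A', i \in A' -> r%:E <= W A' i) ->
  r%:E <= outcome W v A B i.
Proof.
move=> iA iB Wr; have [-> | B0] := eqVneq B finset.set0; first by rewrite /outcome eqxx; exact: Wr.
apply: (le_trans _ (outcome_ge_avg v iA B0 Wr)).
rewrite lee_fin (eq_bigr (fun=> #|B|%:R^-1 * r)%R); last first.
  by move=> j jB; case: eqP jB => [-> | _]; rewrite ?(negbTE iB).
rewrite sumr_const -[(_ *+ #|B|)%R]mulr_natr mulrAC mulVf ?mul1r //.
by rewrite pnatr_eq0 -lt0n card_gt0.
Qed.

(* A winner of the tie at a value v >= th gets at least r plus a 1/k share of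
   the excess v - th, since at most k agents share it. *)
Lemma outcome_ge_selected W v A B i (r th : R) :
  i \in A -> i \in B -> (0 <= r <= th)%R -> (th <= v)%R ->
  (forall A', i \in A' -> r%:E <= W A' i) ->
  (r + k%:R^-1 * (v - th))%:E <= outcome W v A B i.
Proof.
move=> iA iB r0th thv Wr.
have B0 : B != finset.set0 by apply/finset.set0Pn; exists i.
apply: (le_trans _ (outcome_ge_avg v iA B0 Wr)); rewrite lee_fin.
have cardB : #|B| = (#|B :\ i|).+1 by rewrite (cardsD1 i B) iB.
rewrite (big_setD1 i iB) /= eqxx (eq_bigr (fun=> #|B|%:R^-1 * r)%R); last first.
  by move=> j; rewrite finset.in_setD1 => /andP [/negbTE -> _].
rewrite sumr_const -[(_ *+ #|B :\ i|)%R]mulr_natr -mulrA -mulrDr [(r * _)%R]mulrC cardB -addn1 natrD.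
apply: tie_share_ge => //.
rewrite invr_ge0 ler0n /= natr1 -cardB.
have B1 : (0 < #|B|)%N by rewrite cardB.
have Bk : (#|B| <= k)%N by rewrite -[k in (_ <= k)%N]card_ord max_card.
by rewrite lef_pV2 ?posrE ?ltr0n ?ler_nat // (leq_trans B1 Bk).
Qed.

End Selection.
(* The deviation used against any equilibrium: select exactly the values
   reaching the threshold th. *)
Definition threshold {R : realType} {k : nat} (th : R) : strategy R k :=
  fun _ v _ => if (th <= v)%R then 1%R else 0%R.

Lemma threshold_valid {R : realType} {k : nat} (th : R) :
  valid_strategy (@threshold R k th).
Proof.
split=> [t v A | t A]; first by rewrite /threshold; case: ifP; rewrite ?lexx ?ler01.
apply: nondecreasing_measurable => // x y xy; rewrite /threshold.
by case: ifP => thx; case: ifP => thy //; rewrite (le_trans thx xy) in thy.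
Qed.

Section ThresholdDeviation.
Variables (R : realType) (k : nat) (F : nat -> probability R R).
Variables (S : profile R k) (i : 'I_k) (th : R).
Implicit Types (A : {set 'I_k}) (W : {set 'I_k} -> 'I_k -> \bar R).
Hypothesis th0 : (0 <= th)%R.
Hypothesis S01 : forall j t v A, (0 <= S j t v A <= 1)%R.

Let P := deviate S i (threshold th).

Let P01 j t v A : (0 <= P j t v A <= 1)%R.
Proof.
rewrite /P /deviate; case: eqP => _; last exact: S01.
by rewrite /threshold; case: ifP; rewrite ?lexx ?ler01.
Qed.

Let Pi t v A : P i t v A = if (th <= v)%R then 1%R else 0%R.
Proof. by rewrite /P /deviate eqxx. Qed.

Lemma threshold_round_ge W t v A (r : R) :
  i \in A -> (0 <= r <= th)%R -> (forall A', i \in A' -> r%:E <= W A' i) ->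
  (r + k%:R^-1 * excess th v)%:E <=
    \sum_(B in {set 'I_k} | B \subset A) (sel_prob P t v A B)%:E * outcome W v A B i.
Proof.
move=> iA r0th Wr.
set gain := (r + k%:R^-1 * excess th v)%R.
have -> : gain%:E = \sum_(B in {set 'I_k} | B \subset A) (sel_prob P t v A B * gain)%:E.
  by rewrite sumEFin -big_distrl /= sel_prob_sum1 mul1r.
apply: lee_sum => B _; rewrite EFinM.
have sel0 : (0 <= sel_prob P t v A B)%R by apply: sel_prob_ge0.
have [thv | vth] := leP th v; have [iB | iB] := boolP (i \in B).
- apply: lee_wpmul2l; first by rewrite lee_fin.
  rewrite /gain excess_above //; exact: outcome_ge_selected iA iB r0th thv Wr.
- by rewrite (sel_prob_unselected0 iA iB) ?mul0e // Pi thv.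
- by rewrite (sel_prob_selected0 iB) ?mul0e // Pi leNgt vth.
- apply: lee_wpmul2l; first by rewrite lee_fin.
  rewrite /gain (excess_below (ltW vth)) mulr0 addr0.
  by apply: (outcome_ge_unselected v iA).
Qed.

Lemma threshold_guarantee m t A : i \in A ->
  mine th%:E ((k%:R^-1)%:E * excess_mass F th m t) <= cont F P m t A i.
Proof.
elim: m t A => [|m IH] t A iA.
  by rewrite /excess_mass big_ord0 mule0 /= ge_min lexx orbT.
set mu := mine th%:E ((k%:R^-1)%:E * excess_mass F th m t.+1).
have mu0 : 0 <= mu by rewrite le_min lee_fin th0 mule_ge0 // excess_mass_ge0.
have muth : mu <= th%:E by rewrite ge_min lexx.
have muE : mu = (fine mu)%:E.
  by rewrite fineK // ge0_fin_numE // (le_lt_trans muth) // ltry.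
have r0th : (0 <= fine mu <= th)%R.
  by apply/andP; split; rewrite -lee_fin -muE.
set c := \int[F t]_v (excess th v)%:E.
have c0 : 0 <= c by apply: integral_ge0 => v _; rewrite lee_fin excess_ge0.
apply: (@le_trans _ _ (\int[F t]_v (fine mu + k%:R^-1 * excess th v)%:E)).
  rewrite integral_affine_excess ?(andP r0th).1 // -muE excess_massS.
  rewrite ge0_muleDr ?excess_mass_ge0 // addeC.
  by apply: mine_addr_le; rewrite mule_ge0.
have IH' A' : i \in A' -> (fine mu)%:E <= cont F P m t.+1 A' i.
  by rewrite -muE; exact: IH.
have round v := threshold_round_ge t v iA r0th IH'.
apply: le_integral_ge0_ub (round) => v; apply: le_trans (round v).
by rewrite lee_fin addr_ge0 ?(andP r0th).1 // mulr_ge0 // excess_ge0.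
Qed.

End ThresholdDeviation.

(* Choosing the threshold: if every th >= 0 bounds the benchmark by
   k*th + C th while guaranteeing welfare k*min(th, C th / k), then taking
   k*th just above the welfare forces C th below it, so the welfare is at
   least half of the benchmark. *)
Lemma balanced_threshold {R : realType} (k : nat) (opt sw : \bar R) (C : R -> \bar R) :
  (0 < k)%N -> (forall th, 0 <= C th) ->
  (forall th, (0 <= th)%R -> opt <= (k%:R * th)%:E + C th) ->
  (forall th, (0 <= th)%R -> mine th%:E ((k%:R^-1)%:E * C th) *+ k <= sw) ->
  (2^-1)%:E * opt <= sw.
Proof.
move=> k0 C0 opt_le sw_ge.
have kC th : (k%:R^-1)%:E * C th *+ k = C th.
  by rewrite -mule_natl muleA -EFinM mulfV ?mul1e // pnatr_eq0 -lt0n.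
have sw0 : 0 <= sw.
  apply: le_trans (sw_ge 0%R (lexx _)).
  rewrite min_l; first by rewrite -EFin_natmul mul0rn.
  by rewrite mule_ge0 // lee_fin invr_ge0.
case: sw sw0 sw_ge => [s | | //] s0 sw_ge; last by rewrite leey.
rewrite lee_fin in s0.
suff opt_le2s : opt <= (2 * s)%:E.
  apply: le_trans (lee_wpmul2l _ opt_le2s) _; first by rewrite lee_fin invr_ge0.
  by rewrite -EFinM mulrA mulVf ?mul1r.
apply/lee_addgt0Pr => e e0.
pose th := ((s + e) / k%:R)%R.
have th0 : (0 <= th)%R by rewrite divr_ge0 // addr_ge0 // ltW.
have kth : (k%:R * th = s + e)%R by rewrite mulrC mulfVK // pnatr_eq0 -lt0n.
have C_le_s : C th <= s%:E.
  have := sw_ge th th0; rewrite minEle; case: ifP => [_ | _]; last by rewrite kC.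
  by rewrite -EFin_natmul -mulr_natl kth lee_fin gerDl leNgt e0.
apply: le_trans (opt_le th th0) _; rewrite kth.
apply: le_trans (leeD (lexx _) C_le_s) _.
by rewrite -!EFinD lee_fin; lra.
Qed.

Theorem mainTheorem4 (R : realType) (n k : nat) (F : nat -> probability R R)
  (Hnk : (k <= n)%N)
  (Hnonneg : forall t, (t < n)%N -> F t [set x : R | (x < 0)%R]%classic = 0%E)
  (Hmean : forall t, (t < n)%N -> \int[F t]_x `|x%:E| < +oo)
  (S : profile R k) (HS : nash n F S) :
  (2^-1)%:E * iexp F n 0 (fun vs => (top_sum k vs)%:E)
    <= \sum_(i < k) utility n F S i.
Proof.
case: HS => S_valid S_nash.
have S01 j t v A : (0 <= S j t v A <= 1)%R by case: (S_valid j) => /(_ t v A).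
have [k0 | k_gt0] := posnP k.
  subst k; rewrite big_ord0.
  have -> : (fun vs => (top_sum 0 vs)%:E) = fun=> (0 : \bar R).
    by apply/funext => vs; rewrite /top_sum take0 big_nil.
  by rewrite iexp0 mule0.
apply: (balanced_threshold k_gt0 (fun th => excess_mass_ge0 F th n 0)).
  by move=> th th0; exact: top_sum_expectation_le.
move=> th th0.
set guaranteed := mine th%:E _.
apply: (@le_trans _ _ (\sum_(i < k) guaranteed)); first by rewrite sumr_const card_ord.
apply: lee_sum => i _; apply: le_trans (S_nash i _ (threshold_valid th)).
exact: (threshold_guarantee F th0 S01 n 0 (finset.in_setT i)).
Qed.
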